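(* Let $G$ be a strategic game with players $1,\dots,n$ and $\phi=(\phi_1,\dots,\phi_n)$ with each $\phi_i$ a positive optimality condition for player $i$. Then for every belief model $(\Omega,\bar s_1,\dots,\bar s_n,P_1,\dots,P_n)$ for $G$, $$[\![\mathit{rat}_\phi]\!]\cap[\![\Box^*\mathit{rat}_\phi]\!]\subseteq[\![\nu X.\,O_\phi X]\!],$$ i.e. the formula $(\mathit{rat}_\phi\wedge\Box^*\mathit{rat}_\phi)\rightarrow\nu X.O_\phi X$ is valid.
   Context: Strategic game: $G=(T_1,\dots,T_n,<_1,\dots,<_n)$ with arbitrary nonempty strategy sets $T_i$ and $<_i$ a total linear order on $T=\prod_i T_i$; $\ge_i$ its reflexive closure. Notation $s_{-i}$, $(s_i,t_{-i})$ as usual. A restriction is $S=(S_1,\dots,S_n)$ with $S_i\subseteq T_i$. $\mathcal{L}_O$: first-order formulas from atoms $C(a)$, $a\ge^i_c b$ ($a,b,c$ variables or constant $o$) with $\neg,\wedge,\exists$. For an optimality model $(G,G',s)$ ($G'$ a restriction, $s\in T$) and assignment $\alpha$ (variables to $T$, $o\mapsto s$): $C(x)$ holds iff $\alpha(x)_j\in G'_j$ for all $j$; $x\ge^i_z y$ holds iff $(\alpha(x)_i,\alpha(z)_{-i})\ge_i(\alpha(y)_i,\alpha(z)_{-i})$. An optimality condition for $i$ is a closed $\mathcal{L}_O$-formula using only $\ge^i$; it is positive if every $C(\cdot)$ occurs under an even number of negations. Belief model: $(\Omega,\bar s_1,\dots,\bar s_n,P_1,\dots,P_n)$, $\Omega\ne\emptyset$,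 $\bar s_i:\Omega\to T_i$, $P_i:\Omega\to 2^\Omega$; $\bar s(\omega)=(\bar s_i(\omega))_i$; $(G_E)_i=\{\bar s_i(u):u\in E\}$ for $E\subseteq\Omega$. $\mathcal{L}_\nu$: $\psi::=\mathit{rat}_{\phi_i}\mid X\mid\psi\wedge\psi\mid\neg\psi\mid\Box_i\psi\mid O_{\phi_i}\psi\mid\nu X.\psi$ ($\nu$-free body). Semantics $[\![\psi]\!]_E\subseteq\Omega$ for $E\subseteq\Omega$: $[\![\mathit{rat}_{\phi_i}]\!]_E=\{\omega:(G,G_{P_i(\omega)},\bar s(\omega))\models\phi_i\}$; $[\![X]\!]_E=E$; $\wedge,\neg$ as intersection and complement; $[\![\Box_i\psi]\!]_E=\{\omega:P_i(\omega)\subseteq[\![\psi]\!]_E\}$; $[\![O_{\phi_i}\psi]\!]_E=\{\omega:(G,G_{[\![\psi]\!]_E},\bar s(\omega))\models\phi_i\}$; $[\![\nu X.\psi]\!]_E$ is the outcome of the operator $F\mapsto[\![\psi]\!]_F\cap F$ on $\mathcal P(\Omega)$. Here the outcome of an operator $O$ on a complete lattice with top $\top$ is $O^{\alpha}$ for the least ordinal $\alpha$ with $O^{\alpha+1}=O^\alpha$, where $O^0=\top$, $O^{\alpha+1}=O(O^\alpha)$, $O^\beta=\bigcap_{\alpha<\beta}O^\alpha$ for limit $\beta$. For formulas without free $X$ write $[\![\psi]\!]$. Abbreviations $\mathit{rat}_\phi=\bigwedge_i\mathit{rat}_{\phi_i}$, $\Box\psi=\bigwedge_i\Box_i\psi$,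 $O_\phi\psi=\bigwedge_iO_{\phi_i}\psi$, $\Box^*\psi:=\nu X.\Box(X\wedge\psi)$. A formula is valid if its interpretation is $\Omega$ in every belief model for $G$. *)

From mathcomp Require Import all_boot.
Set Implicit Arguments. Unset Strict Implicit. Unset Printing Implicit Defensive.

(* Players are 'I_n (i.e. 0..n-1, standing for 1..n).                  *)

Definition prof (n : nat) (T : 'I_n -> Type) := forall i : 'I_n, T i.

Definition restriction (n : nat) (T : 'I_n -> Type) := forall i : 'I_n, T i -> Prop.

Definition upd (n : nat) (T : 'I_n -> Type) (i : 'I_n) (x z : prof T) : prof T :=
  fun j => if j == i then x j else z j.

Record game (n : nat) (T : 'I_n -> Type) := Game {
  glt : 'I_n -> prof T -> prof T -> Prop;
  glt_irrefl : forall i s, ~ glt i s s;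
  glt_trans : forall i s t u, glt i s t -> glt i t u -> glt i s u;
  glt_total : forall i s t, glt i s t \/ s = t \/ glt i t s;
  T_nonempty : forall i, inhabited (T i)
}.

Definition gge (n : nat) (T : 'I_n -> Type) (G : game T) (i : 'I_n) (s t : prof T) : Prop :=
  glt G i t s \/ s = t.

Inductive oterm := OVar (k : nat) | OConst .

Inductive oform (n : nat) :=
  | OC (a : oterm)
  | OGe (i : 'I_n) (a c b : oterm)
  | ONeg (f : oform n)
  | OAnd (f g : oform n)
  | OEx (k : nat) (f : oform n).

Arguments OC {n} a.
Arguments ONeg {n} f.
Arguments OAnd {n} f g.
Arguments OEx {n} k f.

Definition oval (n : nat) (T : 'I_n -> Type) (s : prof T) (alpha : nat -> prof T) (a : oterm)
  : prof T := match a with OVar k => alpha k | OConst => s end.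

Definition oupd (n : nat) (T : 'I_n -> Type) (alpha : nat -> prof T) (k : nat) (p : prof T)
  : nat -> prof T := fun m => if m == k then p else alpha m.

Fixpoint osat (n : nat) (T : 'I_n -> Type) (G : game T) (G' : restriction T) (s : prof T)
    (alpha : nat -> prof T) (f : oform n) {struct f} : Prop :=
  match f with
  | OC a => forall j, G' j (oval s alpha a j)
  | OGe i a c b =>
      gge G i (upd i (oval s alpha a) (oval s alpha c))
              (upd i (oval s alpha b) (oval s alpha c))
  | ONeg f1 => ~ osat G G' s alpha f1
  | OAnd f1 f2 => osat G G' s alpha f1 /\ osat G G' s alpha f2
  | OEx k f1 => exists p : prof T, osat G G' s (oupd alpha k p) f1
  end.

(* (G, G', s) |= phi  for a closed formula phi (the assignment is irrelevant). *)
Definition omodels (n : nat) (T : 'I_n -> Type) (G : game T) (G' : restriction T) (s : prof T)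
    (f : oform n) : Prop :=
  forall alpha : nat -> prof T, osat G G' s alpha f.

Definition oterm_bound (bound : nat -> Prop) (a : oterm) : Prop :=
  match a with OVar k => bound k | OConst => True end.

Fixpoint oscoped (n : nat) (bound : nat -> Prop) (f : oform n) : Prop :=
  match f with
  | OC a => oterm_bound bound a
  | OGe _ a c b => oterm_bound bound a /\ oterm_bound bound c /\ oterm_bound bound b
  | ONeg f1 => oscoped bound f1
  | OAnd f1 f2 => oscoped bound f1 /\ oscoped bound f2
  | OEx k f1 => oscoped (fun m => m = k \/ bound m) f1
  end.

Definition oclosed (n : nat) (f : oform n) : Prop := oscoped (fun _ => False) f.

Fixpoint only_player (n : nat) (i : 'I_n) (f : oform n) : Prop :=
  match f with
  | OC _ => True
  | OGe j _ _ _ => j = i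
  | ONeg f1 => only_player i f1
  | OAnd f1 f2 => only_player i f1 /\ only_player i f2
  | OEx _ f1 => only_player i f1
  end.

Definition optimality_condition (n : nat) (i : 'I_n) (f : oform n) : Prop :=
  oclosed f /\ only_player i f.

(* every C(.) occurs under an even number of negations;
   [even = true] means we are currently under an even number of negations *)
Fixpoint C_polarity_ok (n : nat) (even : bool) (f : oform n) : Prop :=
  match f with
  | OC _ => even = true
  | OGe _ _ _ _ => True
  | ONeg f1 => C_polarity_ok (~~ even) f1
  | OAnd f1 f2 => C_polarity_ok even f1 /\ C_polarity_ok even f2
  | OEx _ f1 => C_polarity_ok even f1
  end.

Definition positive (n : nat) (f : oform n) : Prop := C_polarity_ok true f.

Record belief_model (n : nat) (T : 'I_n -> Type) := BeliefModel {
  Omega : Type;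
  Omega_nonempty : inhabited Omega;
  sbar : forall i : 'I_n, Omega -> T i;
  Pbel : 'I_n -> Omega -> Omega -> Prop         (* Pbel i w u  <->  u \in P_i(w) *)
}.

Definition sbar_prof (n : nat) (T : 'I_n -> Type) (M : belief_model T) (w : Omega M) : prof T :=
  fun i => @sbar _ _ M i w.

Definition GE (n : nat) (T : 'I_n -> Type) (M : belief_model T) (E : Omega M -> Prop)
  : restriction T :=
  fun i x => exists u, E u /\ @sbar _ _ M i u = x.

(* Outcome of an operator on P(Omega) via transfinite iteration from   *)
(* the top.  The iterates O^alpha are exactly the sets generated from  *)
(* the top by O (successor steps) and by intersections of arbitrary    *)
(* collections of iterates (limit steps); the outcome is the iterate   *)
(* that is a fixed point of O (the first iterate with O^{a+1}=O^a).    *)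

Inductive stage (W : Type) (O : (W -> Prop) -> (W -> Prop)) : (W -> Prop) -> Prop :=
  | stage_top : stage O (fun _ => True)
  | stage_succ : forall X, stage O X -> stage O (O X)
  | stage_lim : forall K : (W -> Prop) -> Prop,
      (forall X, K X -> stage O X) -> stage O (fun w => forall X, K X -> X w).

Definition outcome (W : Type) (O : (W -> Prop) -> (W -> Prop)) : W -> Prop :=
  fun w => exists X, stage O X /\ (forall v, O X v <-> X v) /\ X w.

Inductive lnu (n : nat) :=
  | Rat (i : 'I_n) (phi : oform n)
  | Xv
  | LAnd (p q : lnu n)
  | LNeg (p : lnu n)
  | Box (i : 'I_n) (p : lnu n)
  | Opt (i : 'I_n) (phi : oform n) (p : lnu n)
  | Nu (p : lnu n).

Arguments Xv {n}.
Arguments LAnd {n} p q.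
Arguments LNeg {n} p.
Arguments Nu {n} p.

Fixpoint sem (n : nat) (T : 'I_n -> Type) (G : game T) (M : belief_model T)
    (p : lnu n) (E : Omega M -> Prop) {struct p} : Omega M -> Prop :=
  match p with
  | Rat i phi => fun w => omodels G (GE (@Pbel _ _ M i w)) (sbar_prof w) phi
  | Xv => E
  | LAnd p1 p2 => fun w => @sem n T G M p1 E w /\ @sem n T G M p2 E w
  | LNeg p1 => fun w => ~ @sem n T G M p1 E w
  | Box i p1 => fun w => forall u, @Pbel _ _ M i w u -> @sem n T G M p1 E u
  | Opt i phi p1 => fun w => omodels G (GE (@sem n T G M p1 E)) (sbar_prof w) phi
  | Nu p1 => outcome (fun F => fun w => @sem n T G M p1 F w /\ F w)
  end.

(* Big conjunction over all players (the empty conjunction is the tautology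
   ~(X /\ ~X), whose interpretation is always Omega). *)
Fixpoint bigAnd (n : nat) (l : seq (lnu n)) : lnu n :=
  match l with
  | [::] => LNeg (LAnd Xv (LNeg Xv))
  | [:: p] => p
  | p :: l' => LAnd p (bigAnd l')
  end.

Definition rat_all (n : nat) (phi : 'I_n -> oform n) : lnu n :=
  bigAnd [seq Rat i (phi i) | i <- enum 'I_n].

Definition box_all (n : nat) (p : lnu n) : lnu n :=
  bigAnd [seq Box i p | i <- enum 'I_n].

Definition opt_all (n : nat) (phi : 'I_n -> oform n) (p : lnu n) : lnu n :=
  bigAnd [seq Opt i (phi i) p | i <- enum 'I_n].

Definition boxstar (n : nat) (p : lnu n) : lnu n := Nu (box_all (LAnd Xv p)).

Arguments sem {n T} G M p E _.

(* Let Y be a fixed point witnessing Box^* rat_phi at w and R the states of Y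
   where every player is rational; R contains w and is closed under every
   P_i.  Since phi_i is positive, its satisfaction only grows with the
   restriction, so a player rational with respect to beliefs lying in some
   F satisfies O_phi F.  Hence R lies in every stage of the iteration
   defining nu X. O_phi X, and so in its outcome. *)

From mathcomp Require Import all_boot.

Section Outcome.

Variables (W : Type) (O : (W -> Prop) -> (W -> Prop)).

Lemma stage_sub {R : W -> Prop} :
  (forall F, (forall v, R v -> F v) -> forall v, R v -> O F v) ->
  forall X, stage O X -> forall v, R v -> X v.
Proof.
move=> Opres X; elim=> [//|X0 _ IH|K _ IH v Rv X0 KX0]; first exact: Opres.
exact: IH.
Qed.

Hypothesis O_deflationary : forall F v, O F v -> F v.

(* The intersection of all stages is itself a stage, hence a fixed point. *)
Lemma outcome_coind (R : W -> Prop) :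
  (forall F, (forall v, R v -> F v) -> forall v, R v -> O F v) ->
  forall v, R v -> outcome O v.
Proof.
move=> Opres v Rv.
pose Z v := forall X, stage O X -> X v.
have Zstage : stage O Z by apply: stage_lim.
exists Z; split=> //; split=> [u|]; last by move=> X /(stage_sub Opres); apply.
split; first exact: O_deflationary.
by move=> Zu; apply: Zu _ (stage_succ Zstage).
Qed.

End Outcome.

Lemma outcome_postfixed {W : Type} {O : (W -> Prop) -> (W -> Prop)} {v} :
  outcome O v -> exists Y, Y v /\ forall u, Y u -> O Y u.
Proof. by move=> [Y [_ [YO Yv]]]; exists Y; split=> // u /YO. Qed.

Section PositiveMonotone.

Variables (n : nat) (T : 'I_n -> Type) (G : game T).

Lemma osat_polarity_mono {G1 G2 : restriction T} {s f} :
  (forall j x, G1 j x -> G2 j x) -> forall even alpha, C_polarity_ok even f ->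
  if even then osat G G1 s alpha f -> osat G G2 s alpha f
  else osat G G2 s alpha f -> osat G G1 s alpha f.
Proof.
move=> sub12; elim: f => [a|i a c b|f IH|f IHf g IHg|k f IH] even alpha /=.
- by move=> -> Ha j; apply: sub12.
- by case: even.
- by move=> /(IH _ alpha); case: even => /= mono nf1 f2; apply/nf1/mono.
- move=> [/(IHf _ alpha) monof /(IHg _ alpha) monog].
  by case: even monof monog => /= monof monog [? ?]; split; auto.
- by case: even => pol [p fp]; exists p; apply: (IH _ _ pol).
Qed.

Lemma omodels_positive_mono {G1 G2 : restriction T} {s} {f : oform n} :
  positive f -> (forall j x, G1 j x -> G2 j x) ->
  omodels G G1 s f -> omodels G G2 s f.
Proof.
by move=> pos sub12 f1 alpha; exact: (osat_polarity_mono sub12 true alpha pos (f1 alpha)).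
Qed.

End PositiveMonotone.

Section BeliefModel.

Variables (n : nat) (T : 'I_n -> Type) (G : game T) (M : belief_model T).

Lemma GE_sub {E F : Omega M -> Prop} :
  (forall u, E u -> F u) -> forall j x, @GE _ _ M E j x -> @GE _ _ M F j x.
Proof. by move=> EF j x [u [Eu <-]]; exists u; split=> //; apply: EF. Qed.

Lemma sem_bigAnd_map (f : 'I_n -> lnu n) E v (s : seq 'I_n) :
  sem G M (bigAnd [seq f i | i <- s]) E v <-> forall i, i \in s -> sem G M (f i) E v.
Proof.
elim: s => [|a [|b s] IH].
- by split=> [_ i|_ [? ?]] //; rewrite in_nil.
- by split=> [fa i|fs]; [rewrite mem_seq1 => /eqP -> | apply: fs; rewrite mem_seq1].
- split=> [[fa /IH fs] i|fs]; first by rewrite in_cons => /orP [/eqP -> //|/fs].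
  split; first by apply: fs; rewrite mem_head.
  by apply/IH => i si; apply: fs; rewrite in_cons si orbT.
Qed.

Lemma sem_bigAnd_enum (f : 'I_n -> lnu n) E v :
  sem G M (bigAnd [seq f i | i <- enum 'I_n]) E v <-> forall i, sem G M (f i) E v.
Proof.
by split=> [/sem_bigAnd_map fs i|fs]; [apply: fs | apply/sem_bigAnd_map] => *; rewrite ?mem_enum.
Qed.

Lemma opt_of_rat_beliefs i (f : oform n) E (F : Omega M -> Prop) v :
  positive f -> sem G M (Rat i f) E v -> (forall u, Pbel i v u -> F u) ->
  sem G M (Opt i f Xv) F v.
Proof. by move=> pos rat beliefsF; exact: omodels_positive_mono pos (GE_sub beliefsF) rat. Qed.

Lemma sem_rat_all_env (phi : 'I_n -> oform n) E F v :
  sem G M (rat_all phi) E v -> sem G M (rat_all phi) F v.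
Proof. by move/sem_bigAnd_enum=> rat_v; apply/sem_bigAnd_enum. Qed.

Lemma opt_all_of_rat_all (phi : 'I_n -> oform n) E (F : Omega M -> Prop) v :
  (forall i, positive (phi i)) -> sem G M (rat_all phi) E v ->
  (forall i u, Pbel i v u -> F u) -> sem G M (opt_all phi Xv) F v.
Proof.
move=> pos /sem_bigAnd_enum rat_v beliefsF; apply/sem_bigAnd_enum => i.
exact: opt_of_rat_beliefs (pos i) (rat_v i) (beliefsF i).
Qed.

End BeliefModel.

Theorem mainTheorem2 (n : nat) (T : 'I_n -> Type) (G : game T)
    (phi : 'I_n -> oform n)
    (Hphi : forall i : 'I_n, optimality_condition i (phi i) /\ positive (phi i))
    (M : belief_model T) (w : Omega M) :
  sem G M (rat_all phi) (fun _ => True) w ->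
  sem G M (boxstar (rat_all phi)) (fun _ => True) w ->
  sem G M (Nu (opt_all phi Xv)) (fun _ => True) w.
Proof.
have pos i : positive (phi i) by case: (Hphi i).
move=> rat_w /outcome_postfixed [Y [Yw Ypost]].
pose R v := Y v /\ sem G M (rat_all phi) Y v.
have R_closed v i u : R v -> Pbel i v u -> R u.
  by move=> [/Ypost [/sem_bigAnd_enum boxes _] _] /(boxes i).
apply: (@outcome_coind _ _ _ R) => [F v [] //|F RF v Rv|].
- split; last exact: RF.
  apply: opt_all_of_rat_all pos (proj2 Rv) _ => i u vu.
  exact/RF/(R_closed v i).
- by split; last exact: sem_rat_all_env rat_w.
Qed.
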